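(* Let $n\ge3$ and $\tau\in\mathbb{C}^\times$. With $\Delta$ as in the context, $$\prod_{\mu=2}^{n-2}(x_\mu-z_1\tau)\,\Delta(z_1\tau^{-1},x_2,\dots,x_{n-2}\,|\,z_1\tau^{-n},z_2,\dots,z_n)=\prod_{\mu=2}^{n-2}(x_\mu-z_1\tau^{-1})\,\Delta(z_1\tau,x_2,\dots,x_{n-2}\,|\,z_1\tau^{n},z_2,\dots,z_n).$$
   Context: For $\lambda\ge1$, $A_\lambda(x|z_1,\dots,z_n)=\sum_{\kappa=0}^{\lambda}(-1)^\kappa x^{\lambda-\kappa}\big(\tau^{n(\lambda-\kappa)+\kappa}-\tau^{-n(\lambda-\kappa)-\kappa}\big)\sigma_\kappa(z_1,\dots,z_n)$, where $\sigma_\kappa$ is the $\kappa$-th elementary symmetric polynomial ($\sigma_\kappa=0$ for $\kappa>n$), and $\Delta(x_1,\dots,x_{n-2}|z_1,\dots,z_n)=\det\big(A_\lambda(x_\mu|z_1,\dots,z_n)\big)_{1\le\lambda,\mu\le n-2}$. *)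

From HB Require Import structures.
From mathcomp Require Import all_boot all_order all_algebra.
From mathcomp Require Import reals Rstruct.
From mathcomp Require Import complex.
Set Implicit Arguments. Unset Strict Implicit. Unset Printing Implicit Defensive.
Import Order.TTheory GRing.Theory Num.Theory.
Local Open Scope ring_scope.

Definition Cplx := (Rdefinitions.R)[i].

(* elementary symmetric polynomial sigma_k evaluated at z_1..z_n
   (indices shifted: z_j is z (j-1)); equals 0 when k > n *)
Definition esym (n k : nat) (z : 'I_n -> Cplx) : Cplx :=
  \sum_(S : {set 'I_n} | #|S| == k) \prod_(i in S) z i.

Definition Apoly (n lam : nat) (x : Cplx) (z : 'I_n -> Cplx) (tau : Cplx) : Cplx :=
  \sum_(k < lam.+1)
     (-1) ^+ k * x ^+ (lam - k)
     * (tau ^+ (n * (lam - k) + k) - (tau ^+ (n * (lam - k) + k))^-1)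
     * esym k z.

(* Delta(x_1..x_{n-2} | z_1..z_n) = det (A_lambda(x_mu|z))_{1<=lambda,mu<=n-2};
   row index i : 'I_(n-2) stands for lambda = i+1, column j for mu = j+1. *)
Definition Delta (n : nat) (x : 'I_(n - 2) -> Cplx) (z : 'I_n -> Cplx) (tau : Cplx) : Cplx :=
  \det (\matrix_(i < n - 2, j < n - 2) Apoly i.+1 (x j) z tau).

(* Subtract z1 tau^(n-1) (resp. z1 tau^(1-n)) times row lambda-1 from row lambda
   of the left (resp. right) matrix, and move the prefactors into the columns
   mu >= 2.  Let sigma'_k be the elementary symmetric functions of z_2..z_n and
   H_l(y) = sum_(k<=l) (-1)^k sigma'_k y^(l-k).  When z_1 is replaced by w,
   A_l(x) = tau^l G_l(x tau^(n-1)) - tau^(-l) G_l(x tau^(1-n)) with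
   G_l(y) = (y - w) H_(l-1)(y) + (-1)^l sigma'_l.  Hence the reduced entries
   L_l(x) on the left and R_l(x) on the right satisfy L_l(z1/tau) = R_l(z1 tau)
   and
     (x - z1 tau) L_l(x) = (x - z1/tau) R_l(x) + z1 (1/tau - tau) R_l(z1 tau),
   so the left matrix arises from the right one by adding multiples of its
   first column to the other columns. *)

From Pilot Require Import Defs.
From HB Require Import structures.
From mathcomp Require Import all_boot all_order all_algebra.
From mathcomp Require Import reals Rstruct complex.
From mathcomp Require Import ring zify.
Set Implicit Arguments.
Unset Strict Implicit.
Unset Printing Implicit Defensive.

Import Order.TTheory GRing.Theory Num.Theory.
Local Open Scope ring_scope.

Section DeterminantOperations.
Variable R : comRingType.

Lemma det_sub_prev_row N (b : R) (F : nat -> 'I_N -> R) :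
  (forall j, F 0%N j = 0) ->
  \det (\matrix_(i < N, j < N) (F i.+1 j - b * F i j)) =
  \det (\matrix_(i < N, j < N) F i.+1 j).
Proof.
move=> F0.
pose B := \matrix_(i < N, k < N) ((i == k)%:R - b * (val i == k.+1)%:R : R).
have -> : \matrix_(i < N, j < N) (F i.+1 j - b * F i j) =
          B *m \matrix_(i < N, j < N) F i.+1 j.
  apply/matrixP=> i j; rewrite !mxE.
  under eq_bigr => k _ do rewrite !mxE mulrBl.
  rewrite sumrB (bigD1 i) //= eqxx mul1r big1 ?addr0; last first.
    by move=> k /negPf; rewrite eq_sym => ->; rewrite mul0r.
  congr (_ - _); case: i => [[|i] lt_i_N] /=.
    by rewrite F0 mulr0 big1 // => k _; rewrite mul0r.
  have lt_i_N' : (i < N)%N by apply: ltn_trans lt_i_N.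
  rewrite (bigD1 (Ordinal lt_i_N')) //= eqxx mulr1 big1 ?addr0 // => k neq_k_i.
  case: eqP => [[ik]|_]; last by rewrite mulr0 mul0r.
  by case/eqP: neq_k_i; apply/val_inj; rewrite /= ik.
have trigB : is_trig_mx B.
  apply/is_trig_mxP=> i j lt_ij; rewrite mxE -val_eqE /= (ltn_eqF lt_ij).
  by rewrite (ltn_eqF (ltn_trans lt_ij (ltnSn j))) mulr0 subr0.
rewrite det_mulmx det_trig // big1 ?mul1r // => i _.
by rewrite mxE eqxx eqn_leq ltnn andbF mulr0 subr0.
Qed.

Lemma det_scale_col N (M : 'M[R]_N) (d : 'I_N -> R) :
  \det (\matrix_(i < N, j < N) (M i j * d j)) = \det M * \prod_j d j.
Proof.
have -> : \matrix_(i < N, j < N) (M i j * d j) = M *m diag_mx (\row_j d j).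
  by rewrite mul_mx_diag; apply/matrixP=> i j; rewrite !mxE.
by rewrite det_mulmx det_diag; under eq_bigr do rewrite mxE.
Qed.

Lemma det_add_col0 N (M : 'M[R]_N) (j0 : 'I_N) (k : 'I_N -> R) :
  val j0 = 0%N -> k j0 = 0 ->
  \det (\matrix_(i < N, j < N) (M i j + k j * M i j0)) = \det M.
Proof.
move=> j0_0 kj0_0.
pose U := \matrix_(l < N, j < N) ((l == j)%:R + (l == j0)%:R * k j : R).
have -> : \matrix_(i < N, j < N) (M i j + k j * M i j0) = M *m U.
  apply/matrixP=> i j; rewrite !mxE.
  under eq_bigr => l _ do rewrite !mxE mulrDr.
  rewrite big_split /= (bigD1 j) //= eqxx mulr1 big1 ?addr0; last first.
    by move=> l /negPf ->; rewrite mulr0.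
  rewrite (bigD1 j0) //= eqxx mul1r big1 ?addr0 ?[_ * k j]mulrC //.
  by move=> l /negPf ->; rewrite mul0r mulr0.
have trigUT : is_trig_mx U^T.
  apply/is_trig_mxP=> i j lt_ij; rewrite !mxE -[j == i]val_eqE /= (gtn_eqF lt_ij).
  have -> : (j == j0) = false by apply/negbTE/eqP => ej; move: lt_ij; rewrite ej j0_0.
  by rewrite mul0r addr0.
rewrite det_mulmx -[\det U]det_tr (det_trig trigUT) big1 ?mulr1 // => i _.
by rewrite !mxE eqxx; case: eqP => [->|_]; rewrite ?kj0_0 ?mulr0 ?mul0r addr0.
Qed.

End DeterminantOperations.

Section AlternatingHorner.
Variable R : comRingType.
Implicit Types (e : nat -> R) (y w : R).

Definition lag (f : nat -> R) (l : nat) : R := if l is l'.+1 then f l' else 0.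

Definition alt_horner e y (l : nat) : R :=
  \sum_(k < l.+1) (-1) ^+ k * y ^+ (l - k) * e k.

Lemma alt_horner_rec e y l :
  alt_horner e y l = y * lag (alt_horner e y) l + (-1) ^+ l * e l.
Proof.
case: l => [|l]; first by rewrite /alt_horner big_ord1 /= !expr0 !mul1r mulr0 add0r.
rewrite /alt_horner big_ord_recr subnn expr0 mulr1 /= mulr_sumr; congr (_ + _).
apply: eq_bigr => k _; rewrite subSn; last by rewrite -ltnS ltn_ord.
by rewrite exprS; ring.
Qed.

Lemma lag_alt_hornerS e y l :
  lag (alt_horner e y) l.+1 = y * lag (alt_horner e y) l + (-1) ^+ l * e l.
Proof. exact: alt_horner_rec. Qed.

Lemma alt_horner_lag e y l : alt_horner (lag e) y l = - lag (alt_horner e y) l.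
Proof.
case: l => [|l]; first by rewrite /alt_horner big_ord1 /= mulr0 oppr0.
rewrite /alt_horner big_ord_recl mulr0 add0r -sumrN; apply: eq_bigr => k _.
by rewrite lift0 subSS exprS /=; ring.
Qed.

Lemma alt_hornerDZ e1 e2 w y l :
  alt_horner (fun k => e1 k + w * e2 k) y l
  = alt_horner e1 y l + w * alt_horner e2 y l.
Proof.
by rewrite /alt_horner mulr_sumr -big_split; apply: eq_bigr => k _ /=; ring.
Qed.
End AlternatingHorner.

Definition esym_omit (R : comRingType) (n : nat) (i0 : 'I_n) (z : 'I_n -> R)
    (k : nat) : R :=
  \sum_(S : {set 'I_n} | (#|S| == k) && (i0 \notin S)) \prod_(i in S) z i.

Lemma esym_split n (i0 : 'I_n) (z z' : 'I_n -> Cplx) k :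
  (forall i, i != i0 -> z' i = z i) ->
  Defs.esym k z' = esym_omit i0 z k + z' i0 * lag (esym_omit i0 z) k.
Proof.
move=> z'z; rewrite /Defs.esym (bigID (fun S : {set 'I_n} => i0 \notin S)) /=.
congr (_ + _).
  apply: eq_bigr => S /andP[_ i0S]; apply: eq_bigr => i iS; apply: z'z.
  by apply: contraNneq i0S => <-.
transitivity (z' i0 * \sum_(S : {set 'I_n} | (#|S| == k) && (i0 \in S))
                        \prod_(i in S :\ i0) z i).
  rewrite mulr_sumr; apply: eq_big => [S|S /andP[_ /negPn i0S]]; first by rewrite negbK.
  rewrite (bigD1 i0) //=; congr (_ * _).
  by apply: eq_big => [i|i /andP[_ ne_i_i0]]; rewrite ?z'z // !inE andbC.
congr (_ * _); case: k => [|k].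
  rewrite big_pred0 // => S.
  by apply/negbTE/andP => -[/eqP/cards0_eq ->]; rewrite inE.
rewrite /= /esym_omit (reindex_onto (fun S => i0 |: S) (fun S => S :\ i0)) /=; last first.
  by move=> S /andP[_ i0S]; rewrite setD1K.
apply: eq_big => [S|S /andP[_ /eqP ->]] //.
rewrite setU11 andbT cardsU1; case: (boolP (i0 \in S)) => [i0S|i0S].
  have /negbTE -> : (i0 |: S) :\ i0 != S by apply: contraTneq i0S => <-; rewrite setD11.
  by rewrite !andbF.
by rewrite (setU1K i0S) eqxx !andbT add1n eqSS.
Qed.

Lemma alt_horner_esym n (i0 : 'I_n) (z z' : 'I_n -> Cplx) y l :
  (forall i, i != i0 -> z' i = z i) ->
  alt_horner (fun k => Defs.esym k z') y l
  = (y - z' i0) * lag (alt_horner (esym_omit i0 z) y) l + (-1) ^+ l * esym_omit i0 z l.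
Proof.
move=> z'z.
transitivity
  (alt_horner (fun k => esym_omit i0 z k + z' i0 * lag (esym_omit i0 z) k) y l).
  by apply: eq_bigr => k _; rewrite (esym_split _ z'z).
by rewrite alt_hornerDZ alt_horner_lag {1}alt_horner_rec; ring.
Qed.

Lemma Apoly_alt_horner n l X (z : 'I_n -> Cplx) tau : (0 < n)%N -> tau != 0 ->
  Apoly l X z tau
  = tau ^+ l * alt_horner (fun k => Defs.esym k z) (X * tau ^+ n.-1) l
    - (tau ^+ l)^-1 * alt_horner (fun k => Defs.esym k z) (X / tau ^+ n.-1) l.
Proof.
move=> n_gt0 tau_neq0; rewrite /Apoly /alt_horner !mulr_sumr -sumrB.
apply: eq_bigr => -[k lt_k_l] _ /=.
have -> : (n * (l - k) + k = l + n.-1 * (l - k))%N.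
  by rewrite -[in LHS](prednK n_gt0) mulSn; lia.
by rewrite exprD exprM invfM !exprMn exprVn; ring.
Qed.

Definition Ared n (l : nat) (c X : Cplx) (z : 'I_n -> Cplx) (tau : Cplx) : Cplx :=
  Apoly l.+1 X z tau - c * Apoly l X z tau.

Section ReducedRows.
Variables (n : nat) (tau a : Cplx) (i0 : 'I_n) (z zL zR : 'I_n -> Cplx).
Hypotheses (n_gt0 : (0 < n)%N) (tau_neq0 : tau != 0).
Hypotheses (zL_i0 : zL i0 = a * (tau ^+ n)^-1) (zR_i0 : zR i0 = a * tau ^+ n).
Hypotheses (zLz : forall i, i != i0 -> zL i = z i)
           (zRz : forall i, i != i0 -> zR i = z i).
Let q := tau ^+ n.-1.

Let tau_n : tau ^+ n = tau * q.
Proof. by rewrite /q -exprS prednK. Qed.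

Let q_neq0 : q != 0.
Proof. by rewrite expf_neq0. Qed.

Lemma Ared_swap l : Ared l (a * q) (a / tau) zL tau = Ared l (a / q) (a * tau) zR tau.
Proof.
have taul_neq0 : tau ^+ l != 0 by rewrite expf_neq0.
rewrite /Ared !Apoly_alt_horner // !(alt_horner_esym _ _ zLz).
rewrite !(alt_horner_esym _ _ zRz) !lag_alt_hornerS.
rewrite zL_i0 zR_i0 tau_n exprS -/q.
by field; rewrite q_neq0 taul_neq0 tau_neq0.
Qed.

Lemma Ared_relation l X :
  (X - a * tau) * Ared l (a * q) X zL tau
  = (X - a / tau) * Ared l (a / q) X zR tau
    + a * (tau^-1 - tau) * Ared l (a / q) (a * tau) zR tau.
Proof.
have taul_neq0 : tau ^+ l != 0 by rewrite expf_neq0.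
rewrite /Ared !Apoly_alt_horner // !(alt_horner_esym _ _ zLz).
rewrite !(alt_horner_esym _ _ zRz) !lag_alt_hornerS.
rewrite zL_i0 zR_i0 tau_n exprS -/q.
by field; rewrite q_neq0 taul_neq0 tau_neq0.
Qed.

End ReducedRows.

Lemma Apoly0 n X (z : 'I_n -> Cplx) tau : Apoly 0 X z tau = 0.
Proof. by rewrite /Apoly big_ord1 /= muln0 expr0 invr1 subrr mulr0 mul0r. Qed.

Lemma Delta_rowred n (x : 'I_(n - 2) -> Cplx) (z : 'I_n -> Cplx) tau c
    (d : 'I_(n - 2) -> Cplx) :
  \prod_j d j * Delta x z tau
  = \det (\matrix_(i < n - 2, j < n - 2) (Ared i c (x j) z tau * d j)).
Proof.
transitivity (\det (\matrix_(i < n - 2, j < n - 2) (Apoly i.+1 (x j) z tau * d j))).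
  rewrite /Delta mulrC -det_scale_col.
  by congr (\det _); apply/matrixP => i j; rewrite !mxE.
rewrite -(det_sub_prev_row c (F := fun i j => Apoly i (x j) z tau * d j)) => [|j].
  by congr (\det _); apply/matrixP => i j; rewrite !mxE /Ared mulrBl mulrA.
by rewrite Apoly0 mul0r.
Qed.

Theorem lemma4p2 (n : nat) (hn : (3 <= n)%N) (tau : Cplx) (htau : tau != 0)
  (x : 'I_(n - 2) -> Cplx) (z : 'I_n -> Cplx) (z1 : Cplx)
  (hz1 : forall i : 'I_n, val i = 0%N -> z i = z1) :
  (\prod_(j < n - 2 | val j != 0%N) (x j - z1 * tau))
    * Delta (fun j : 'I_(n - 2) => if val j == 0%N then z1 * tau^-1 else x j)
            (fun i : 'I_n => if val i == 0%N then z1 * (tau ^+ n)^-1 else z i) tau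
  = (\prod_(j < n - 2 | val j != 0%N) (x j - z1 * tau^-1))
    * Delta (fun j : 'I_(n - 2) => if val j == 0%N then z1 * tau else x j)
            (fun i : 'I_n => if val i == 0%N then z1 * tau ^+ n else z i) tau.
Proof.
have n_gt0 : (0 < n)%N by apply: leq_trans hn.
have n2_gt0 : (0 < n - 2)%N by rewrite subn_gt0.
pose i0 : 'I_n := Ordinal n_gt0.
pose j0 : 'I_(n - 2) := Ordinal n2_gt0.
set zL := fun i : 'I_n => if val i == 0%N then z1 * (tau ^+ n)^-1 else z i.
set zR := fun i : 'I_n => if val i == 0%N then z1 * tau ^+ n else z i.
have off_i0 w i : i != i0 -> (if val i == 0%N then w else z i) = z i.
  by move=> ne_i_i0; case: eqP => // i_0; case/eqP: ne_i_i0; apply: val_inj.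
have zLz i : i != i0 -> zL i = z i := off_i0 _ i.
have zRz i : i != i0 -> zR i = z i := off_i0 _ i.
have zL_i0 : zL i0 = z1 / tau ^+ n by [].
have zR_i0 : zR i0 = z1 * tau ^+ n by [].
pose k (j : 'I_(n - 2)) : Cplx := if val j == 0%N then 0 else z1 * (tau^-1 - tau).
rewrite [in LHS]big_mkcond (Delta_rowred _ _ _ (z1 * tau ^+ n.-1)).
rewrite [in RHS]big_mkcond (Delta_rowred _ _ _ (z1 / tau ^+ n.-1)).
rewrite -[in RHS](@det_add_col0 _ _ _ j0 k) //.
congr (\det _); apply/matrixP => i j; rewrite !mxE /k eqxx.
case: (val j == 0%N); rewrite ?mulr1 ?mul0r ?addr0.
  exact: (Ared_swap n_gt0 htau zL_i0 zR_i0 zLz zRz).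
by rewrite [LHS]mulrC (Ared_relation n_gt0 htau zL_i0 zR_i0 zLz zRz) mulrC.
Qed.
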